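(* Let $n,n'\in\mathbb{N}$, $\mathbb{K}$ a field, $R=\mathbb{K}[X_1,\ldots,X_n]$, $R'=\mathbb{K}[X_1,\ldots,X_{n'}]$, and let $J'\subsetneq I'\subset R'$ be monomial ideals. Let $\phi:\mathbb{N}^n\to\mathbb{N}^{n'}$ be a monotonic map, let $\Phi:R\to R'$ be the $\mathbb{K}$-linear map with $\Phi(X^a)=X^{\phi(a)}$ on monomials, and set $I:=\Phi^{-1}(I')$, $J:=\Phi^{-1}(J')$. Choose $g\in\mathbb{N}^n$ and $g'\in\mathbb{N}^{n'}$ such that every minimal generator of $I$ and $J$ divides $X^g$ and every minimal generator of $I'$ and $J'$ divides $X^{g'}$. Let $\ell\in\mathbb{Z}$ and assume $\phi$ changes the Stanley depth by $\ell$ with respect to $g$ and $g'$. Then (i) $I$ and $J$ are monomial ideals, and (ii) $\operatorname{sdepth} I/J \ge \operatorname{sdepth} I'/J' + \ell$.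
   Context: $\mathbb{N}^n$ carries the componentwise partial order; $[a,b]=\{c: a\le c\le b\}$; a map is monotonic if it preserves this order. A monotonic map $\phi:\mathbb{N}^n\to\mathbb{N}^{n'}$ changes the Stanley depth by $\ell\in\mathbb{Z}$ with respect to $g\in\mathbb{N}^n$ and $g'\in\mathbb{N}^{n'}$ if (1) $\phi(g)\le g'$, and (2) for every interval $[a',b']\subset[0,g']$, the set $\phi^{-1}([a',b'])\cap[0,g]$ is a finite disjoint union $\bigcup_i[a^i,b^i]$ of intervals with $\#\{j\in[n]: b^i_j=g_j\}\ge\#\{j\in[n']: b'_j=g'_j\}+\ell$ for all $i$. Stanley depth: with the fine multigrading, a Stanley decomposition of a finitely generated multigraded module $M$ is a finite family $(\mathbb{K}[Z_k], m_k)$ with $m_k$ homogeneous, $Z_k$ subsets of the variables, $m_k\mathbb{K}[Z_k]$ free over $\mathbb{K}[Z_k]$, and $M=\bigoplus_k m_k\mathbb{K}[Z_k]$ as multigraded $\mathbb{K}$-vector spaces; its depth is $\min_k|Z_k|$, and $\operatorname{sdepth}M$ is the maximal depth of a Stanley decomposition. *)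

(* Monomial ideals of K[X_1..X_n] are represented by their
   sets of exponent vectors (upward-closed subsets of N^n). *)
From mathcomp Require Import all_boot all_order all_algebra.
Set Implicit Arguments. Unset Strict Implicit. Unset Printing Implicit Defensive.
Import Order.TTheory GRing.Theory Num.Theory.

Definition vec (n : nat) := {ffun 'I_n -> nat}.

Definition vle n (a b : vec n) : Prop := forall i, (a i <= b i)%N.

Definition in_interval n (a b c : vec n) : Prop := vle a c /\ vle c b.

Definition monotonic n n' (phi : vec n -> vec n') : Prop :=
  forall a b, vle a b -> vle (phi a) (phi b).

Definition monomial_ideal n (I : vec n -> Prop) : Prop :=
  forall a b, I a -> vle a b -> I b.

Definition min_gen n (I : vec n -> Prop) (a : vec n) : Prop :=
  I a /\ forall b, I b -> vle b a -> b = a.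

(* the monomial ideal I := Phi^{-1}(I'), X^a in I iff X^{phi a} in I' *)
Definition preimage_ideal n n' (phi : vec n -> vec n') (I' : vec n' -> Prop)
  : vec n -> Prop := fun a => I' (phi a).

Definition nb_eq n (b g : vec n) : nat := #|[set j : 'I_n | b j == g j]|.

Definition changes_sdepth n n' (phi : vec n -> vec n') (l : int)
  (g : vec n) (g' : vec n') : Prop :=
  vle (phi g) g' /\
  forall a' b' : vec n',
    (forall c, in_interval a' b' c -> vle c g') ->
    exists (k : nat) (A B : 'I_k -> vec n),
      (forall i, vle (A i) (B i)) /\
      (forall i j c, in_interval (A i) (B i) c -> in_interval (A j) (B j) c -> i = j) /\
      (forall c, (in_interval a' b' (phi c) /\ vle c g) <->
                 exists i, in_interval (A i) (B i) c) /\
      (forall i, ((nb_eq (B i) g)%:Z >= (nb_eq b' g')%:Z + l)%R).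

(* the monomials of m K[Z], m a monomial, Z a set of variables *)
Definition in_cone n (m : vec n) (Z : {set 'I_n}) (c : vec n) : Prop :=
  vle m c /\ forall i, i \notin Z -> c i = m i.

(* (m_t K[Z_t])_{t<k} is a Stanley decomposition of I/J (fine multigrading):
   each m_t K[Z_t] is a free K[Z_t]-submodule of I/J (all its monomials lie
   in I \ J), and I/J is the direct sum of them (every monomial of I \ J lies
   in exactly one of them). *)
Definition stanley_decomp n (I J : vec n -> Prop) (k : nat)
  (m : 'I_k -> vec n) (Z : 'I_k -> {set 'I_n}) : Prop :=
  (forall t c, in_cone (m t) (Z t) c -> I c /\ ~ J c) /\
  (forall c, I c -> ~ J c -> exists! t, in_cone (m t) (Z t) c).

(* I/J has a Stanley decomposition of depth >= d, i.e. sdepth I/J >= d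
   (with the convention sdepth 0 = +oo) *)
Definition sdepth_ge n (I J : vec n -> Prop) (d : int) : Prop :=
  exists (k : nat) (m : 'I_k -> vec n) (Z : 'I_k -> {set 'I_n}),
    stanley_decomp I J m Z /\ forall t, (d <= (#|Z t|)%:Z)%R.

(* By Herzog, Vladoiu and Zheng, sdepth I/J >= d as soon as the characteristic
   poset P^g_{I/J} (the exponents x <= g of the monomials of I \ J) is
   partitioned into intervals [a, b] each having at least d coordinates with
   b_j = g_j; conversely a Stanley decomposition of depth d induces such a
   partition, for any bound g.  Now x lies in P^g_{I/J} iff x <= g and phi x
   lies in P^g'_{I'/J'}, so pulling back every block of a partition of
   P^g'_{I'/J'} along phi and splitting it into the intervals granted by the
   hypothesis on phi partitions P^g_{I/J}, with l more such coordinates on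
   every block. *)
From mathcomp Require Import all_boot all_order all_algebra.
From mathcomp Require Import zify.
From Stdlib Require Import Classical ClassicalEpsilon.
Import Order.TTheory GRing.Theory Num.Theory.
Set Implicit Arguments. Unset Strict Implicit. Unset Printing Implicit Defensive.

Lemma choice_in (A B : Type) (P : A -> Prop) (R : A -> B -> Prop) :
  inhabited B -> (forall x, P x -> exists y, R x y) ->
  exists f : A -> B, forall x, P x -> R x (f x).
Proof.
move=> inhB hR; exists (fun x => epsilon inhB (R x)) => x Px.
exact: epsilon_spec (hR x Px).
Qed.

Lemma vle_refl n (a : vec n) : vle a a.
Proof. by []. Qed.

Lemma vle_trans n (a b c : vec n) : vle a b -> vle b c -> vle a c.
Proof. by move=> hab hbc i; apply: leq_trans (hab i) (hbc i). Qed.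

Definition vsum n (c : vec n) : nat := \sum_(j < n) c j.

Lemma vsum_lt n (a c : vec n) : vle a c -> a <> c -> vsum a < vsum c.
Proof.
move=> hac neq; rewrite (ltn_leqif (leqif_sum (fun j _ => leqif_eq (hac j)))).
apply: contra_notN neq => /forallP eq_ac; apply/ffunP => j; exact/eqP/eq_ac.
Qed.

Lemma min_gen_below n (I : vec n -> Prop) (c : vec n) :
  I c -> exists2 a, min_gen I a & vle a c.
Proof.
induction c as [c IH] using (well_founded_ind (Wf_nat.well_founded_ltof _ (@vsum n))).
move=> Ic; case: (classic (exists2 b, I b /\ vle b c & b <> c)) => [[b [Ib bc] neq]|].
  have [a ma ab] := IH b (elimT ssrnat.ltP (vsum_lt bc neq)) Ib.
  by exists a => //; apply: vle_trans ab bc.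
move=> nobelow; exists c => //; split=> // b Ib bc.
by apply: NNPP => neq; apply: nobelow; exists b.
Qed.

Definition vmin n (c g : vec n) : vec n := [ffun j => minn (c j) (g j)].

Lemma monomial_ideal_vmin n (I : vec n -> Prop) (g c : vec n) :
  monomial_ideal I -> (forall a, min_gen I a -> vle a g) -> I c <-> I (vmin c g).
Proof.
move=> mI gI; split=> [Ic|Imin]; last by apply: mI Imin _ => j; rewrite ffunE geq_minl.
have [a ma ac] := min_gen_below Ic.
apply: mI ma.1 _ => j; rewrite ffunE leq_min ac; exact: gI ma j.
Qed.

Definition eq_coords n (b g : vec n) : {set 'I_n} := [set j | b j == g j].

Lemma vmin_in_interval n (a b g x c : vec n) :
  in_interval a b x -> vle x g -> in_cone x (eq_coords b g) c -> in_interval a b (vmin c g).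
Proof.
move=> [ax xb] xg [xc cx]; split=> j; rewrite ffunE;
  have [jZ|jZ] := boolP (j \in eq_coords b g); rewrite ?(cx j jZ) ?(minn_idPl (xg j)) //.
- by rewrite leq_min (leq_trans (ax j) (xc j)) (leq_trans (ax j) (xg j)).
- by move: jZ; rewrite inE => /eqP ->; rewrite geq_minr.
Qed.

Definition char_poset n (I J : vec n -> Prop) (g x : vec n) : Prop :=
  vle x g /\ I x /\ ~ J x.

Lemma char_poset_vmin n (I J : vec n -> Prop) (g c : vec n) :
  monomial_ideal I -> monomial_ideal J ->
  (forall a, min_gen I a -> vle a g) -> (forall a, min_gen J a -> vle a g) ->
  char_poset I J g (vmin c g) <-> I c /\ ~ J c.
Proof.
move=> mI mJ gI gJ; rewrite (monomial_ideal_vmin c mI gI) (monomial_ideal_vmin c mJ gJ).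
by split=> [[]|[]] // Ic nJc; split=> // j; rewrite ffunE geq_minr.
Qed.

(* [a x, b x] is the block containing x *)
Definition interval_partition n (S : vec n -> Prop) (a b : vec n -> vec n) : Prop :=
  forall x, S x -> in_interval (a x) (b x) x /\
    forall y, in_interval (a x) (b x) y -> S y /\ a y = a x /\ b y = b x.

Lemma eq_interval_partition n (S T : vec n -> Prop) (a b : vec n -> vec n) :
  (forall x, S x <-> T x) -> interval_partition S a b -> interval_partition T a b.
Proof.
move=> eqST part x /eqST /part [xab blk]; split=> // y /blk [Sy eqy].
by split=> //; apply/eqST.
Qed.

Lemma interval_partition_of_family n (S : vec n -> Prop) k (A B : 'I_k -> vec n) :
  (forall i j c, in_interval (A i) (B i) c -> in_interval (A j) (B j) c -> i = j) ->
  (forall c, S c <-> exists i, in_interval (A i) (B i) c) ->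
  exists a b, interval_partition S a b /\ forall x, S x -> exists i, b x = B i.
Proof.
move=> disj cover.
have : forall x, S x -> exists p, exists2 i, p = (A i, B i) & in_interval (A i) (B i) x.
  by move=> x /cover [i xi]; exists (A i, B i); exists i.
case/(choice_in (inhabits ([ffun=> 0], [ffun=> 0]))) => f hf.
exists (fun x => (f x).1), (fun x => (f x).2); split=> [x Sx|x /hf [i -> _]]; last by exists i.
have [i -> xi] := hf x Sx; split=> // y yi.
have Sy : S y by apply/cover; exists i.
have [j -> yj] := hf y Sy.
by rewrite (disj _ _ _ yi yj).
Qed.

Section PreimagePartition.

Variables (n n' : nat) (phi : vec n -> vec n') (l : int) (g : vec n) (g' : vec n').
Hypothesis phi_sdepth : changes_sdepth phi l g g'.

Lemma changes_sdepth_partition (a' b' : vec n') :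
  (forall c, in_interval a' b' c -> vle c g') ->
  exists a b, interval_partition (fun x => in_interval a' b' (phi x) /\ vle x g) a b /\
    forall x, in_interval a' b' (phi x) -> vle x g ->
      ((nb_eq (b x) g)%:Z >= (nb_eq b' g')%:Z + l)%R.
Proof.
move=> below; have [k [A [B [_ [disj [cover depth]]]]]] := phi_sdepth.2 a' b' below.
have [a [b [part blk]]] := interval_partition_of_family disj cover.
exists a, b; split=> // x x' xg; have [i ->] := blk x (conj x' xg); exact: depth.
Qed.

Lemma interval_partition_preimage (S' : vec n' -> Prop) (a' b' : vec n' -> vec n') :
  (forall x, S' x -> vle x g') -> interval_partition S' a' b' ->
  exists a b, interval_partition (fun x => vle x g /\ S' (phi x)) a b /\
    forall x, vle x g -> S' (phi x) ->
      ((nb_eq (b x) g)%:Z >= (nb_eq (b' (phi x)) g')%:Z + l)%R.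
Proof.
move=> S'g part'.
pose block_ok (p : vec n' * vec n') := forall c, in_interval p.1 p.2 c -> vle c g'.
have : forall p, block_ok p -> exists ab : (vec n -> vec n) * (vec n -> vec n),
      interval_partition (fun x => in_interval p.1 p.2 (phi x) /\ vle x g) ab.1 ab.2 /\
      forall x, in_interval p.1 p.2 (phi x) -> vle x g ->
        ((nb_eq (ab.2 x) g)%:Z >= (nb_eq p.2 g')%:Z + l)%R.
  by move=> p /changes_sdepth_partition [a [b ab]]; exists (a, b).
case/(choice_in (inhabits (id, id))) => F hF.
have okx x : S' (phi x) -> block_ok (a' (phi x), b' (phi x)).
  by move=> /part' [_ blk] c /blk [/S'g].
pose blockx x := F (a' (phi x), b' (phi x)).
exists (fun x => (blockx x).1 x), (fun x => (blockx x).2 x); split; last first.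
  by move=> x xg S'x; apply: (hF _ (okx x S'x)).2 => //; exact: (part' _ S'x).1.
move=> x [xg S'x]; have [phix_in blk'] := part' _ S'x.
have [xab blk] := (hF _ (okx x S'x)).1 x (conj phix_in xg).
split=> // y yab; have [[phiy_in yg] [eqa eqb]] := blk y yab.
by have [S'y [eqa' eqb']] := blk' _ phiy_in; rewrite /blockx eqa' eqb'.
Qed.

End PreimagePartition.

Definition cone_top n (g m : vec n) (Z : {set 'I_n}) : vec n :=
  [ffun j => if j \in Z then g j else minn (m j) (g j)].

Lemma in_interval_cone_top n (g m c : vec n) (Z : {set 'I_n}) :
  in_interval m (cone_top g m Z) c <-> in_cone m Z c /\ vle c g.
Proof.
split=> [[mc ctop]|[[mc cm] cg]].
  have cg j : c j <= g j.
    by apply: leq_trans (ctop j) _; rewrite ffunE; case: ifP => // _; rewrite geq_minr.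
  split=> //; split=> // j jZ; apply/eqP; rewrite eqn_leq mc andbT.
  by have := ctop j; rewrite ffunE (negbTE jZ) leq_min => /andP[].
split=> // j; rewrite ffunE; case: ifP => jZ; first exact: cg.
by rewrite leq_min cg andbT cm ?jZ.
Qed.

Lemma card_le_nb_eq_cone_top n (g m : vec n) (Z : {set 'I_n}) :
  #|Z| <= nb_eq (cone_top g m Z) g.
Proof.
by apply: subset_leq_card; apply/subsetP => j jZ; rewrite inE ffunE jZ.
Qed.

Lemma sdepth_ge_interval_partition n (I J : vec n -> Prop) (g : vec n) (d : int) :
  sdepth_ge I J d -> exists a b, interval_partition (char_poset I J g) a b /\
    forall x, char_poset I J g x -> (d <= (nb_eq (b x) g)%:Z)%R.
Proof.
move=> [k [m [Z [[cone_sub cone_cover] depth]]]].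
pose top t := cone_top g (m t) (Z t).
have disj i j c : in_interval (m i) (top i) c -> in_interval (m j) (top j) c -> i = j.
  move=> /in_interval_cone_top [ci _] /in_interval_cone_top [cj _].
  have [Ic nJc] := cone_sub i c ci; have [t [_ uniq]] := cone_cover c Ic nJc.
  by rewrite -(uniq i ci) (uniq j cj).
have cover c : char_poset I J g c <-> exists i, in_interval (m i) (top i) c.
  split=> [[cg [Ic nJc]]|[i /in_interval_cone_top [ci cg]]].
    by have [t [ct _]] := cone_cover c Ic nJc; exists t; apply/in_interval_cone_top.
  by split=> //; apply: cone_sub ci.
have [a [b [part blk]]] := interval_partition_of_family disj cover.
exists a, b; split=> // x /blk [t ->].
by apply: le_trans (depth t) _; rewrite lez_nat card_le_nb_eq_cone_top.
Qed.

Lemma bounded_enum n (g : vec n) (P : vec n -> Prop) :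
  (forall x, P x -> vle x g) ->
  exists k (e : 'I_k -> vec n),
    [/\ forall t, P (e t), injective e & forall x, P x -> exists t, e t = x].
Proof.
move=> Pg; pose N := \max_(j < n) g j.
have gN j : g j <= N by apply: leq_bigmax.
pose val_box (v : {ffun 'I_n -> 'I_N.+1}) : vec n := [ffun j => nat_of_ord (v j)].
have val_box_inj : injective val_box.
  by move=> v w /ffunP eqvw; apply/ffunP => j; apply: val_inj; have := eqvw j; rewrite !ffunE.
pose A := [pred v | excluded_middle_informative (P (val_box v))].
have AP v : v \in A -> P (val_box v) by rewrite inE; case: excluded_middle_informative.
exists #|A|, (fun t => val_box (enum_val t)); split.
- by move=> t; apply: AP; exact: enum_valP.
- by move=> s t /val_box_inj /enum_val_inj.
move=> x Px; pose v : {ffun 'I_n -> 'I_N.+1} := [ffun j => inord (x j)].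
have vx : val_box v = x.
  by apply/ffunP => j; rewrite !ffunE inordK // ltnS (leq_trans (Pg x Px j)).
have vA : v \in A by rewrite inE; case: excluded_middle_informative; rewrite vx.
by exists (enum_rank_in vA v); rewrite enum_rankK_in.
Qed.

Section StanleyOfPartition.

Variables (n : nat) (I J : vec n -> Prop) (g : vec n) (a b : vec n -> vec n).
Hypotheses (mI : monomial_ideal I) (mJ : monomial_ideal J).
Hypotheses (gI : forall x, min_gen I x -> vle x g) (gJ : forall x, min_gen J x -> vle x g).
Hypothesis part : interval_partition (char_poset I J g) a b.

Let P := char_poset I J g.
Let Z x := eq_coords (b x) g.

(* the cones of the Stanley decomposition are anchored at the points of P
   that agree with the bottom of their block on the coordinates of Z *)
Let anchor x : vec n := [ffun j => if j \in Z x then a x j else x j].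
Let is_anchor x := P x /\ anchor x = x.

Lemma anchor_in_block x : P x -> in_interval (a x) (b x) (anchor x).
Proof.
move=> /part [[ax xb] _]; split=> j; rewrite ffunE; case: ifP => // _.
exact: leq_trans (ax j) (xb j).
Qed.

Lemma block_anchor x : P x -> P (anchor x) /\ a (anchor x) = a x /\ b (anchor x) = b x.
Proof. by move=> Px; apply: (part Px).2; apply: anchor_in_block. Qed.

Lemma is_anchor_anchor x : P x -> is_anchor (anchor x).
Proof.
move=> Px; have [Pan [ea eb]] := block_anchor Px.
split=> //; apply/ffunP => j; rewrite /anchor /Z ea eb !ffunE.
by case: (j \in _).
Qed.

Lemma cone_in_block x c : is_anchor x -> in_cone x (Z x) c -> in_interval (a x) (b x) (vmin c g).
Proof. by move=> [Px _]; apply: vmin_in_interval (part Px).1 Px.1. Qed.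

Lemma cone_sub x c : is_anchor x -> in_cone x (Z x) c -> I c /\ ~ J c.
Proof.
move=> [Px eqx] xc; apply/(char_poset_vmin c mI mJ gI gJ).
exact: ((part Px).2 _ (cone_in_block (conj Px eqx) xc)).1.
Qed.

Lemma in_cone_anchor c : I c -> ~ J c ->
  in_cone (anchor (vmin c g)) (Z (anchor (vmin c g))) c.
Proof.
move=> Ic nJc; set p := vmin c g; have Pp : P p by apply/char_poset_vmin.
have [[ap pb] _] := part Pp.
have bg : vle (b p) g := ((part Pp).2 _ (conj (vle_trans ap pb) (vle_refl _))).1.1.
have pc : vle p c by move=> j; rewrite ffunE geq_minl.
rewrite /Z (block_anchor Pp).2.2; split=> j; rewrite ffunE.
  by case: ifP => _; [exact: leq_trans (ap j) (pc j) | exact: pc].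
rewrite inE => jZ; rewrite (negbTE jZ); apply/eqP; rewrite eqn_leq pc andbT.
have := pb j; have := bg j; move: jZ; rewrite /p !ffunE; lia.
Qed.

Lemma anchor_unique x c : is_anchor x -> in_cone x (Z x) c -> x = anchor (vmin c g).
Proof.
move=> [Px eqx] xc; have [_ [ea eb]] := (part Px).2 _ (cone_in_block (conj Px eqx) xc).
rewrite -{1}eqx; apply/ffunP => j; rewrite !ffunE /Z ea eb.
case: ifP => // jZ; rewrite xc.2 ?jZ //; exact/esym/minn_idPl/(Px.1 j).
Qed.

Lemma interval_partition_sdepth_ge (d : int) :
  (forall x, P x -> (d <= (nb_eq (b x) g)%:Z)%R) -> sdepth_ge I J d.
Proof.
move=> depth.
have [k [e [ane e_inj e_onto]]] := bounded_enum (fun x (ax : is_anchor x) => ax.1.1).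
exists k, e, (fun t => Z (e t)); split; last by move=> t; apply: depth (ane t).1.
split=> [t c|c Ic nJc]; first exact: cone_sub (ane t).
have Pc : P (vmin c g) by apply/char_poset_vmin.
have [t et] := e_onto _ (is_anchor_anchor Pc).
exists t; split=> [|s cs]; first by rewrite et; apply: in_cone_anchor.
by apply: e_inj; rewrite et (anchor_unique (ane s) cs).
Qed.

End StanleyOfPartition.

Lemma preimage_monomial_ideal n n' (phi : vec n -> vec n') (I' : vec n' -> Prop) :
  monotonic phi -> monomial_ideal I' -> monomial_ideal (preimage_ideal phi I').
Proof. by move=> mono mI' a b Ia ab; apply: mI' Ia (mono _ _ ab). Qed.

Theorem proposition3p3 (n n' : nat) (phi : vec n -> vec n')
  (I' J' : vec n' -> Prop) (g : vec n) (g' : vec n') (l : int) :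
  monomial_ideal I' -> monomial_ideal J' ->
  (forall a, J' a -> I' a) -> (exists a, I' a /\ ~ J' a) ->
  monotonic phi ->
  (forall a, min_gen (preimage_ideal phi I') a -> vle a g) ->
  (forall a, min_gen (preimage_ideal phi J') a -> vle a g) ->
  (forall a, min_gen I' a -> vle a g') ->
  (forall a, min_gen J' a -> vle a g') ->
  changes_sdepth phi l g g' ->
  (monomial_ideal (preimage_ideal phi I') /\ monomial_ideal (preimage_ideal phi J')) /\
  (forall d : int, sdepth_ge I' J' d ->
     sdepth_ge (preimage_ideal phi I') (preimage_ideal phi J') (d + l)%R).
Proof.
move=> mI' mJ' _ _ mono gI gJ _ _ phi_sdepth.
have [mI mJ] := (preimage_monomial_ideal mono mI', preimage_monomial_ideal mono mJ').
split=> // d /(sdepth_ge_interval_partition g') [a' [b' [part' depth']]].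
have [a [b [part depth]]] :=
  interval_partition_preimage phi_sdepth (fun x (Px : char_poset I' J' g' x) => Px.1) part'.
have phig x : vle x g -> vle (phi x) g' by move=> xg; apply: vle_trans (mono _ _ xg) phi_sdepth.1.
apply: (interval_partition_sdepth_ge mI mJ gI gJ (a := a) (b := b)).
  apply: eq_interval_partition part => x.
  by split=> [[xg [_ IJx]]|[xg IJx]]; split=> //; split=> //; apply: phig.
move=> x [xg IJx]; have Px' : char_poset I' J' g' (phi x) by split=> //; apply: phig.
exact: le_trans (lerD (depth' _ Px') (lexx l)) (depth x xg Px').
Qed.
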